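(* Let $P:\mathcal{C}^{\mathrm{op}}\to\mathbf{Pos}$ be a slat-doctrine whose fibres have finite joins. Then its universal completion $P^{un}$ satisfies the counterexample property: for all objects $A,B$ of $\mathcal{C}$ and every $\alpha\in P(A\times B)$, if $(A,B,\alpha)\le(A,1,\bot_{A\times 1})$ in $P^{un}(A)$ (i.e. ''$a{:}A\mid\forall b{:}B\,\alpha(a,b)\vdash\bot$''), then there exists an arrow $g:A\to B$ of $\mathcal{C}$ such that $P_{\langle 1_A,g\rangle}(\alpha)\le\bot_A$ in $P(A)$ (i.e. ''$a{:}A\mid\alpha(a,g(a))\vdash\bot$'').
   Context: A slat-doctrine is a functor $P:\mathcal{C}^{\mathrm{op}}\to\mathbf{Pos}$ with $\mathcal{C}$ having finite products; $P_f:P(Y)\to P(X)$ is reindexing along $f:X\to Y$; $\bot_X$ denotes the least element of $P(X)$. Universal completion: $P^{un}(A)$ is the poset (reflection of the preorder) of triples $(A,B,\alpha)$ with $\alpha\in P(A\times B)$, where $(A,B,\alpha)\le(A,C,\beta)$ iff there is an arrow $g:A\times C\to B$ with $P_{\langle\mathrm{pr}_A,g\rangle}(\alpha)\le\beta$; the triple $(A,B,\alpha)$ represents the formula $\forall b{:}B\,\alpha(a,b)$ (it is the universal quantification along $\mathrm{pr}_A:A\times B\to A$ of the image of $\alpha$ in $P^{un}(A\times B)$), and $(A,1,\bot_{A\times 1})$ represents $\bot$ in $P^{un}(A)$. *)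

Set Implicit Arguments.
Unset Strict Implicit.

Record FPCat := {
  Ob :> Type;
  Hom : Ob -> Ob -> Type;
  idC : forall A, Hom A A;
  comp : forall A B C, Hom B C -> Hom A B -> Hom A C;
  comp_id_l : forall A B (f : Hom A B), comp (idC B) f = f;
  comp_id_r : forall A B (f : Hom A B), comp f (idC A) = f;
  comp_assoc : forall A B C D (h : Hom C D) (g : Hom B C) (f : Hom A B),
      comp h (comp g f) = comp (comp h g) f;
  term : Ob;
  bang : forall A, Hom A term;
  bang_unique : forall A (f : Hom A term), f = bang A;
  prodO : Ob -> Ob -> Ob;
  pr1 : forall A B, Hom (prodO A B) A;
  pr2 : forall A B, Hom (prodO A B) B;
  pairH : forall X A B, Hom X A -> Hom X B -> Hom X (prodO A B);
  pair_pr1 : forall X A B (f : Hom X A) (g : Hom X B), comp (pr1 A B) (pairH f g) = f;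
  pair_pr2 : forall X A B (f : Hom X A) (g : Hom X B), comp (pr2 A B) (pairH f g) = g;
  pair_unique : forall X A B (h : Hom X (prodO A B)),
      h = pairH (comp (pr1 A B) h) (comp (pr2 A B) h)
}.

Arguments Hom {_}.
Arguments idC {_}.
Arguments comp {_ _ _ _}.
Arguments term {_}.
Arguments bang {_}.
Arguments prodO {_}.
Arguments pr1 {_ A B}.
Arguments pr2 {_ A B}.
Arguments pairH {_ X A B}.

Record Doctrine (C : FPCat) := {
  fibre : C -> Type;
  le : forall X, fibre X -> fibre X -> Prop;
  le_refl : forall X (x : fibre X), le x x;
  le_trans : forall X (x y z : fibre X), le x y -> le y z -> le x z;
  le_antisym : forall X (x y : fibre X), le x y -> le y x -> x = y;
  reindex : forall X Y, Hom X Y -> fibre Y -> fibre X;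
  reindex_mono : forall X Y (f : Hom X Y) (a b : fibre Y),
      le a b -> le (reindex f a) (reindex f b);
  reindex_id : forall X (a : fibre X), reindex (idC X) a = a;
  reindex_comp : forall X Y Z (f : Hom X Y) (g : Hom Y Z) (a : fibre Z),
      reindex (comp g f) a = reindex f (reindex g a)
}.

Arguments le {C} d {X}.
Arguments reindex {C} d {X Y}.

Record FiniteJoins (C : FPCat) (P : Doctrine C) := {
  botF : forall X, fibre P X;
  botF_least : forall X (a : fibre P X), le P (botF X) a;
  joinF : forall X, fibre P X -> fibre P X -> fibre P X;
  joinF_lub : forall X (a b c : fibre P X),
      le P (joinF a b) c <-> (le P a c /\ le P b c)
}.

Arguments botF {C P} f X.

(** The order of the universal completion P^un(A), on triples (A,B,alpha)
    (represented by the pair of B and alpha : P(A x B)):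
    (A,B,alpha) <= (A,C,beta) iff there is g : A x C -> B with
    P_<pr_A, g>(alpha) <= beta.  The poset P^un(A) is the reflection of this
    preorder, whose order relation on classes is exactly this relation. *)
Definition un_le (C : FPCat) (P : Doctrine C) (A B D : C)
  (alpha : fibre P (prodO A B)) (beta : fibre P (prodO A D)) : Prop :=
  exists g : Hom (prodO A D) B, le P (reindex P (pairH pr1 g) alpha) beta.
Arguments un_le {C} P {A B D}.


(* The inequality (A,B,alpha) <= (A,1,bot) provides g : A x 1 -> B with
   alpha(a, g(a,b)) |- bot(a,b); instantiating the dummy variable b : 1 by
   the unique arrow A -> 1 turns g into the required witness A -> B, and
   reindexing bot along the section <1_A, !> of the projection A x 1 -> A
   gives back bot. *)

Lemma pair_comp (C : FPCat) (X Y A B : C) (f : Hom Y A) (g : Hom Y B) (h : Hom X Y) :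
  comp (pairH f g) h = pairH (comp f h) (comp g h).
Proof.
  rewrite (pair_unique (comp (pairH f g) h)), !comp_assoc, pair_pr1, pair_pr2.
  reflexivity.
Qed.

Lemma un_le_instance {C : FPCat} {P : Doctrine C} {A B D : C}
  {alpha : fibre P (prodO A B)} {beta : fibre P (prodO A D)} (d : Hom A D) :
  un_le P alpha beta ->
  exists g : Hom A B,
    le P (reindex P (pairH (idC A) g) alpha) (reindex P (pairH (idC A) d) beta).
Proof.
  intros [g Hg].
  exists (comp g (pairH (idC A) d)).
  assert (Epair : pairH (idC A) (comp g (pairH (idC A) d))
                  = comp (pairH pr1 g) (pairH (idC A) d)).
  { rewrite pair_comp, pair_pr1. reflexivity. }
  rewrite Epair, reindex_comp.
  apply reindex_mono, Hg.
Qed.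

Lemma reindex_bot_section (C : FPCat) (P : Doctrine C) (J : FiniteJoins P)
  (X Y : C) (s : Hom X Y) (r : Hom Y X) :
  comp r s = idC X -> le P (reindex P s (botF J Y)) (botF J X).
Proof.
  intros Hrs.
  assert (Hbot : le P (botF J Y) (reindex P r (botF J X))) by apply botF_least.
  apply (le_trans (reindex_mono s Hbot)).
  rewrite <- reindex_comp, Hrs, reindex_id.
  apply le_refl.
Qed.

Theorem theorem11 (C : FPCat) (P : Doctrine C) (J : FiniteJoins P)
  (A B : C) (alpha : fibre P (prodO A B)) :
  un_le P alpha (botF J (prodO A term)) ->
  exists g : Hom A B, le P (reindex P (pairH (idC A) g) alpha) (botF J A).
Proof.
  intros Hle.
  destruct (un_le_instance (bang A) Hle) as [g Hg].
  exists g.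
  apply (le_trans Hg).
  apply reindex_bot_section with (r := pr1).
  apply pair_pr1.
Qed.
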